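(* Let $c,d>0$ with $cd\le1$, $g(x)=xF(c,d;c+d;x)$ for $x\in(0,1)$, and $b\ge a>0$. Then for every $s\ge1$, $$1\le\frac{g\!\left(\frac{s^b}{1+s^b}\right)}{g\!\left(\frac{s^a}{1+s^a}\right)}\le\frac ba.$$
   Context: $F(a,b;c;x)$ is the Gaussian hypergeometric function $\sum_{n\ge0}\frac{(a)_n(b)_n}{(c)_n}\frac{x^n}{n!}$ ($|x|<1$), with $(a)_n=a(a+1)\cdots(a+n-1)$, $(a)_0=1$. (In the claim, $a,b$ denote the exponents, not hypergeometric parameters.) *)

From Stdlib Require Import Reals Factorial.
Open Scope R_scope.

Fixpoint poch (a : R) (n : nat) : R :=
  match n with
  | O => 1
  | S k => poch a k * (a + INR k)
  end.

Definition hyp_term (a b c x : R) (n : nat) : R :=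
  poch a n * poch b n / poch c n * x ^ n / INR (fact n).

Definition hypF (a b c x l : R) : Prop := infinite_sum (hyp_term a b c x) l.

Definition g_val (c d x v : R) : Prop :=
  exists l, hypF c d (c + d) x l /\ v = x * l.

From Stdlib Require Import Reals Factorial Lra Lia Psatz.
From Coquelicot Require Import Coquelicot.
Open Scope R_scope.

(* Write g(x) = x F(c,d;c+d;x) = sum_n w_n x^(n+1)/(n+1) with
   w_n = (n+1) (c)_n (d)_n / ((c+d)_n n!).  The weights are positive and, because
   cd <= 1, nonincreasing.  Put x_t = s^t/(1+s^t) = logistic (t ln s).
   - Lower bound: the partial sums of g are nondecreasing in x, and x_a <= x_b.
   - Upper bound: by Abel summation against the nonincreasing weights w_n it is
     enough to prove a P_N(x_b) <= b P_N(x_a) for the logarithmic partial sums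
     P_N(x) = sum_{n<=N} x^(n+1)/(n+1), i.e. that y |-> P_N(logistic y)/y is
     nonincreasing on (0,oo).  Its derivative has the sign of
     y x(1-x) P_N'(x) - P_N(x) with x = logistic y, y = ln(x/(1-x)), and
     P_N(x) >= ln(x/(1-x)) x(1-x) P_N'(x) on [1/2,1) is proved term by term or,
     for large N, from the remainder bound of the series of -ln(1-x).
   The file develops, in order: the partial sums P_N and their remainder bound,
   the key inequality, the logistic substitution, the weights w_n, Abel
   summation, the comparison of partial sums of g with passage to the limit,
   and finally the theorem. *)

Definition log_partial (N : nat) (x : R) : R :=
  sum_f_R0 (fun n => x ^ S n / INR (S n)) N.
Definition geom_partial (N : nat) (x : R) : R := sum_f_R0 (fun n => x ^ n) N.

Lemma log_partial_derive N x : is_derive (log_partial N) x (geom_partial N x).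
Proof.
  induction N as [|N IH].
  - unfold log_partial, geom_partial; simpl. auto_derive; auto. field.
  - change (geom_partial (S N) x) with (plus (geom_partial N x) (x ^ S N)).
    apply is_derive_ext with
      (fun y => plus (log_partial N y) (y ^ S (S N) / INR (S (S N)))).
    { reflexivity. }
    apply (@is_derive_plus R_AbsRing R_NormedModule); [exact IH|].
    assert (INR (S (S N)) <> 0) by (apply not_0_INR; lia).
    auto_derive; auto.
    change (match N with 0%nat => 1 | S _ => INR N + 1 end) with (INR (S N)).
    rewrite <- S_INR. simpl. field. assumption.
Qed.

Lemma geom_partial_closed N x : geom_partial N x * (1 - x) = 1 - x ^ S N.
Proof.
  induction N as [|N IH]; unfold geom_partial in *; simpl; [ring|].
  rewrite Rmult_plus_distr_r, IH. simpl. ring.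
Qed.

Lemma log_partial_0 N : log_partial N 0 = 0.
Proof.
  induction N as [|N IH]; unfold log_partial in *; simpl sum_f_R0.
  - unfold Rdiv; ring.
  - change (sum_f_R0 (fun n => 0 ^ S n / INR (S n)) N + 0 ^ S (S N) / INR (S (S N)) = 0).
    rewrite IH, pow_i by lia. unfold Rdiv; ring.
Qed.

Lemma log_partial_nonneg N x : 0 <= x -> 0 <= log_partial N x.
Proof.
  intros Hx. apply cond_pos_sum. intros n.
  apply Rmult_le_pos; [apply pow_le; lra|].
  apply Rlt_le, Rinv_0_lt_compat, lt_0_INR; lia.
Qed.

Lemma nonincreasing_of_derive_nonpos (f df : R -> R) (a b : R) : a <= b ->
  (forall x, a <= x <= b -> is_derive f x (df x)) ->
  (forall x, a <= x <= b -> df x <= 0) -> f b <= f a.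
Proof.
  intros Hab Hd Hn.
  destruct (Req_dec a b) as [->|Hne]; [lra|].
  destruct (MVT_gen f a b df) as [t [Ht Hmvt]].
  - intros x Hx. apply Hd. rewrite Rmin_left, Rmax_right in Hx; lra.
  - intros x Hx. rewrite Rmin_left, Rmax_right in Hx by lra.
    apply continuity_pt_filterlim, (@ex_derive_continuous R_AbsRing R_NormedModule).
    eexists; apply Hd; lra.
  - rewrite Rmin_left, Rmax_right in Ht by lra.
    assert (df t <= 0) by (apply Hn; lra). nra.
Qed.

(* Remainder estimate: -ln(1-x) - log_partial N x <= x^(N+2) / ((N+2)(1-x)),
   obtained by showing that the difference of the two sides decreases from 0. *)
Lemma log_partial_tail N x : 0 <= x < 1 ->
  - ln (1 - x) - log_partial N x <= x ^ S (S N) / (INR (S (S N)) * (1 - x)).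
Proof.
  intros Hx.
  set (K := INR (S (S N))).
  assert (HK : 0 < K) by (apply lt_0_INR; lia).
  set (f := fun t => - (t ^ S (S N) / (K * (1 - t)) + ln (1 - t) + log_partial N t)).
  assert (Hf : f x <= f 0).
  { apply (nonincreasing_of_derive_nonpos f
             (fun t => - (t ^ S (S N) / (K * (1 - t) ^ 2))) 0 x); [lra| |].
    - intros t Ht.
      evar (dA : R).
      assert (HA : is_derive (fun t => t ^ S (S N) / (K * (1 - t)) + ln (1 - t)) t dA).
      { auto_derive.
        - repeat split; try lra; apply Rgt_not_eq, Rmult_lt_0_compat; lra.
        - subst dA; reflexivity. }
      apply is_derive_ext with (fun t => opp (plus
        (t ^ S (S N) / (K * (1 - t)) + ln (1 - t)) (log_partial N t))).
      { reflexivity. }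
      replace (- (t ^ S (S N) / (K * (1 - t) ^ 2)))
        with (opp (plus dA (geom_partial N t))).
      { apply (@is_derive_opp R_AbsRing R_NormedModule),
              (@is_derive_plus R_AbsRing R_NormedModule); [exact HA|].
        apply log_partial_derive. }
      subst dA.
      assert (HG := geom_partial_closed N t).
      assert (geom_partial N t = (1 - t ^ S N) / (1 - t)) as ->
        by (field_simplify_eq; lra).
      unfold opp, plus; simpl.
      change (match N with 0%nat => 1 | S _ => INR N + 1 end) with (INR (S N)).
      unfold K. rewrite !S_INR. field. split; [lra|].
      rewrite <- !S_INR. apply not_0_INR; lia.
    - intros t Ht.
      assert (0 <= t ^ S (S N) / (K * (1 - t) ^ 2)).
      { apply Rmult_le_pos; [apply pow_le; lra|].
        apply Rlt_le, Rinv_0_lt_compat, Rmult_lt_0_compat; [lra|].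
        apply pow_lt; lra. }
      lra. }
  unfold f in Hf.
  rewrite Rminus_0_r, ln_1, log_partial_0, pow_i in Hf by lia.
  unfold Rdiv in *. rewrite Rmult_0_l in Hf. lra.
Qed.

(* When L(1-x) <= 1/(N+1) the inequality holds term by term:
   x^(n+1)/(n+1) >= L (1-x) x^(n+1) for every n <= N. *)
Lemma log_partial_ge_termwise N x L : 0 <= x -> 0 <= L ->
  L * (1 - x) <= / INR (S N) ->
  L * x * (1 - x) * geom_partial N x <= log_partial N x.
Proof.
  intros Hx HL. induction N as [|N IH]; intros HN.
  - unfold log_partial, geom_partial; simpl in *. nra.
  - change (log_partial (S N) x) with (log_partial N x + x * x ^ S N / INR (S (S N))).
    change (geom_partial (S N) x) with (geom_partial N x + x ^ S N).
    assert (HSS : / INR (S (S N)) <= / INR (S N)).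
    { apply Rinv_le_contravar; [apply lt_0_INR; lia| apply le_INR; lia]. }
    assert (Hpow : 0 <= x * x ^ S N) by (apply Rmult_le_pos, pow_le; lra).
    assert (x * x ^ S N * (L * (1 - x)) <= x * x ^ S N * / INR (S (S N)))
      by (apply Rmult_le_compat_l; lra).
    specialize (IH ltac:(lra)). unfold Rdiv. nra.
Qed.

(* When L(1-x)(N+2) >= 1, compare with the full series through the remainder
   estimate, using also L x <= -ln(1-x). *)
Lemma log_partial_ge_tail N x L : 0 <= x < 1 ->
  L * x <= - ln (1 - x) -> 1 <= L * (1 - x) * INR (S (S N)) ->
  L * x * (1 - x) * geom_partial N x <= log_partial N x.
Proof.
  intros Hx HLx HN.
  assert (HK : 0 < INR (S (S N))) by (apply lt_0_INR; lia).
  assert (Htail := log_partial_tail N x Hx).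
  assert (Hz : 0 <= x ^ S (S N)) by (apply pow_le; lra).
  assert (Hrem : x ^ S (S N) / (INR (S (S N)) * (1 - x)) <= L * x ^ S (S N)).
  { apply (Rmult_le_reg_r (INR (S (S N)) * (1 - x))); [nra|].
    unfold Rdiv. rewrite Rmult_assoc, Rinv_l by nra. nra. }
  rewrite Rmult_assoc, (Rmult_assoc L x), (Rmult_comm (1 - x)), geom_partial_closed.
  change (x ^ S (S N)) with (x * x ^ S N) in *.
  nra.
Qed.

Lemma log_partial_key N x : / 2 <= x < 1 ->
  ln (x / (1 - x)) * x * (1 - x) * geom_partial N x <= log_partial N x.
Proof.
  intros Hx.
  set (L := ln (x / (1 - x))).
  assert (HL : 0 <= L).
  { unfold L. rewrite <- ln_1. apply ln_le; [lra|].
    apply (Rmult_le_reg_r (1 - x)); [lra|].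
    unfold Rdiv. rewrite Rmult_assoc, Rinv_l; lra. }
  destruct (Rle_or_lt (L * (1 - x)) (/ INR (S N))) as [Hsmall|Hlarge].
  - apply log_partial_ge_termwise; lra.
  - apply log_partial_ge_tail; [lra| |].
    + unfold L. rewrite ln_div by lra.
      assert (ln x <= 0) by (rewrite <- ln_1; apply ln_le; lra).
      assert (ln (1 - x) <= 0) by (rewrite <- ln_1; apply ln_le; lra).
      nra.
    + assert (HN : 0 < INR (S N)) by (apply lt_0_INR; lia).
      assert (HNN : INR (S N) <= INR (S (S N))) by (apply le_INR; lia).
      apply (Rmult_lt_compat_r (INR (S N))) in Hlarge; [|lra].
      rewrite Rinv_l in Hlarge by lra. nra.
Qed.

(* With y = t ln s, the points of the theorem are s^t/(1+s^t) = logistic (t ln s). *)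
Definition logistic (y : R) : R := exp y / (1 + exp y).

Lemma exp_monotone x y : x <= y -> exp x <= exp y.
Proof. intros [Hlt| ->]; [left; apply exp_increasing | right]; auto. Qed.

Lemma logistic_derive y : is_derive logistic y (logistic y * (1 - logistic y)).
Proof.
  assert (He := exp_pos y). unfold logistic. auto_derive; [lra|]. field. lra.
Qed.

Lemma logistic_logit y : ln (logistic y / (1 - logistic y)) = y.
Proof.
  assert (He := exp_pos y).
  replace (logistic y / (1 - logistic y)) with (exp y); [apply ln_exp|].
  unfold logistic. field. split; lra.
Qed.

Lemma logistic_bounds y : 0 <= y -> / 2 <= logistic y < 1.
Proof.
  intros Hy.
  assert (He : 1 <= exp y) by (rewrite <- exp_0; apply exp_monotone; lra).
  unfold logistic. split.
  - apply (Rmult_le_reg_r (1 + exp y)); [lra|].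
    unfold Rdiv. rewrite Rmult_assoc, Rinv_l; lra.
  - apply (Rmult_lt_reg_r (1 + exp y)); [lra|].
    unfold Rdiv. rewrite Rmult_assoc, Rinv_l; lra.
Qed.

Lemma logistic_le y1 y2 : y1 <= y2 -> logistic y1 <= logistic y2.
Proof.
  intros Hy. assert (He : exp y1 <= exp y2) by (apply exp_monotone; lra).
  assert (H1 := exp_pos y1). unfold logistic.
  apply (Rmult_le_reg_r ((1 + exp y1) * (1 + exp y2))); [nra|].
  replace (exp y1 / (1 + exp y1) * ((1 + exp y1) * (1 + exp y2)))
    with (exp y1 * (1 + exp y2)) by (field; lra).
  replace (exp y2 / (1 + exp y2) * ((1 + exp y1) * (1 + exp y2)))
    with (exp y2 * (1 + exp y1)) by (field; lra).
  nra.
Qed.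

(* y |-> log_partial N (logistic y) / y is nonincreasing on (0,oo): the sign of
   its derivative is that of y x(1-x) geom_partial N x - log_partial N x with
   x = logistic y, y = ln(x/(1-x)), which is <= 0 by [log_partial_key]. *)
Lemma log_partial_logistic_ratio N y1 y2 : 0 < y1 <= y2 ->
  y1 * log_partial N (logistic y2) <= y2 * log_partial N (logistic y1).
Proof.
  intros Hy.
  set (F := fun y => log_partial N (logistic y) / y).
  assert (HF : F y2 <= F y1).
  { apply (nonincreasing_of_derive_nonpos F (fun y =>
      (geom_partial N (logistic y) * (logistic y * (1 - logistic y)) * y
       - log_partial N (logistic y) * 1) / y ^ 2) y1 y2); [lra| |].
    - intros y Hy'. unfold F.
      apply (is_derive_div (fun y => log_partial N (logistic y)) (fun y => y));
        [| apply (@is_derive_id R_AbsRing) | lra].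
      replace (geom_partial N (logistic y) * (logistic y * (1 - logistic y)))
        with (scal (logistic y * (1 - logistic y)) (geom_partial N (logistic y)))
        by (unfold scal; simpl; unfold mult; simpl; ring).
      apply (@is_derive_comp R_AbsRing R_NormedModule);
        [apply log_partial_derive | apply logistic_derive].
    - intros y Hy'.
      assert (Hkey := log_partial_key N (logistic y) (logistic_bounds y ltac:(lra))).
      rewrite logistic_logit in Hkey.
      assert (0 < y ^ 2) by (apply pow_lt; lra).
      unfold Rdiv. apply Rmult_le_0_r; [nra|].
      apply Rlt_le, Rinv_0_lt_compat; lra. }
  unfold F in HF.
  apply (Rmult_le_compat_r (y1 * y2)) in HF; [|nra].
  replace (log_partial N (logistic y2) / y2 * (y1 * y2))
    with (y1 * log_partial N (logistic y2)) in HF by (field; lra).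
  replace (log_partial N (logistic y1) / y1 * (y1 * y2))
    with (y2 * log_partial N (logistic y1)) in HF by (field; lra).
  exact HF.
Qed.

Lemma log_partial_logistic_scaled N a b u : 0 < a <= b -> 0 <= u ->
  a * log_partial N (logistic (b * u)) <= b * log_partial N (logistic (a * u)).
Proof.
  intros Hab Hu.
  destruct (Req_dec u 0) as [->|Hu0].
  - rewrite !Rmult_0_r.
    assert (0 <= log_partial N (logistic 0))
      by (apply log_partial_nonneg; pose proof (logistic_bounds 0 (Rle_refl 0)); lra).
    nra.
  - assert (Hr := log_partial_logistic_ratio N (a * u) (b * u) ltac:(split; nra)).
    apply (Rmult_le_reg_l u); nra.
Qed.

Lemma poch_pos a n : 0 < a -> 0 < poch a n.
Proof.
  intros Ha. induction n as [|n IH]; simpl; [lra|].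
  apply Rmult_lt_0_compat; [exact IH|].
  assert (0 <= INR n) by apply pos_INR. lra.
Qed.

(* Writing g(x) = x F(c,d;c+d;x) = sum_n g_coef n x^(n+1)/(n+1), the weights
   g_coef n = (n+1) (c)_n (d)_n / ((c+d)_n n!) are positive and, when cd <= 1,
   nonincreasing: the ratio g_coef (n+1) / g_coef n equals
   (n+2)(c+n)(d+n) / ((n+1)^2 (c+d+n)), which is <= 1 since 2cd <= c+d. *)
Definition hyp_coef (c d : R) (n : nat) : R :=
  poch c n * poch d n / poch (c + d) n / INR (fact n).
Definition g_coef (c d : R) (n : nat) : R := INR (S n) * hyp_coef c d n.

Lemma hyp_term_coef c d x n : hyp_term c d (c + d) x n = hyp_coef c d n * x ^ n.
Proof. unfold hyp_term, hyp_coef, Rdiv. ring. Qed.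

Section Coefficients.

Variables c d : R.
Hypothesis hc : 0 < c.
Hypothesis hd : 0 < d.

Lemma hyp_coef_pos n : 0 < hyp_coef c d n.
Proof.
  assert (0 < poch c n) by (apply poch_pos; lra).
  assert (0 < poch d n) by (apply poch_pos; lra).
  assert (0 < poch (c + d) n) by (apply poch_pos; lra).
  assert (0 < INR (fact n)) by (apply lt_0_INR, lt_O_fact).
  unfold hyp_coef, Rdiv.
  apply Rmult_lt_0_compat; [|apply Rinv_0_lt_compat; lra].
  apply Rmult_lt_0_compat; [|apply Rinv_0_lt_compat; lra]. nra.
Qed.

Lemma g_coef_pos n : 0 < g_coef c d n.
Proof. apply Rmult_lt_0_compat; [apply lt_0_INR; lia | apply hyp_coef_pos]. Qed.

Lemma hyp_coef_succ n : hyp_coef c d (S n) =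
  hyp_coef c d n * ((c + INR n) * (d + INR n) / ((c + d + INR n) * INR (S n))).
Proof.
  unfold hyp_coef. simpl poch. rewrite fact_simpl, mult_INR.
  assert (0 < poch (c + d) n) by (apply poch_pos; lra).
  assert (0 < INR (fact n)) by (apply lt_0_INR, lt_O_fact).
  assert (0 <= INR n) by apply pos_INR.
  assert (0 < INR (S n)) by (apply lt_0_INR; lia).
  field. repeat split; lra.
Qed.

(* 2cd <= c + d follows from (c+d)^2 >= 4cd >= 4(cd)^2 when cd <= 1. *)
Lemma two_mul_le_add : c * d <= 1 -> 2 * (c * d) <= c + d.
Proof.
  intros hcd.
  assert (0 < c * d) by (apply Rmult_lt_0_compat; lra).
  assert (4 * (c * d) * (c * d) <= 4 * (c * d)) by nra.
  assert (4 * (c * d) <= (c + d) * (c + d))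
    by (pose proof (Rle_0_sqr (c - d)); unfold Rsqr in *; nra).
  destruct (Rle_or_lt (2 * (c * d)) (c + d)) as [|Hlt]; [assumption|].
  assert ((c + d) * (c + d) < (2 * (c * d)) * (2 * (c * d)))
    by (apply Rmult_le_0_lt_compat; lra).
  lra.
Qed.

Lemma g_coef_decr n : c * d <= 1 -> g_coef c d (S n) <= g_coef c d n.
Proof.
  intros hcd. unfold g_coef. rewrite hyp_coef_succ.
  assert (Hpos := hyp_coef_pos n).
  assert (H2 := two_mul_le_add hcd).
  rewrite (S_INR (S n)), S_INR.
  assert (Hm : 0 <= INR n) by apply pos_INR.
  set (m := INR n) in *.
  assert (Hratio : (m + 2) * ((c + m) * (d + m)) <= (m + 1) * (m + 1) * (c + d + m))
    by nra.
  replace ((m + 1 + 1) * (hyp_coef c d n * ((c + m) * (d + m) / ((c + d + m) * (m + 1)))))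
    with (hyp_coef c d n * ((m + 2) * ((c + m) * (d + m)) / ((c + d + m) * (m + 1))))
    by (field; lra).
  rewrite (Rmult_comm (m + 1)). apply Rmult_le_compat_l; [lra|].
  apply (Rmult_le_reg_r ((c + d + m) * (m + 1))); [nra|].
  unfold Rdiv. rewrite Rmult_assoc, Rinv_l by nra. nra.
Qed.

Lemma g_partial_sum x M :
  x * sum_f_R0 (hyp_term c d (c + d) x) M
  = sum_f_R0 (fun n => g_coef c d n * (x ^ S n / INR (S n))) M.
Proof.
  rewrite scal_sum. apply sum_eq. intros n _.
  rewrite hyp_term_coef. unfold g_coef. simpl pow. field. apply not_0_INR; lia.
Qed.

End Coefficients.

Lemma summation_by_parts (w D : nat -> R) M :
  sum_f_R0 (fun n => w n * D n) (S M) =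
  sum_f_R0 (fun N => (w N - w (S N)) * sum_f_R0 D N) M + w (S M) * sum_f_R0 D (S M).
Proof.
  induction M as [|M IH]; [simpl; ring|].
  change (sum_f_R0 (fun n => w n * D n) (S (S M)))
    with (sum_f_R0 (fun n => w n * D n) (S M) + w (S (S M)) * D (S (S M))).
  rewrite IH. simpl. ring.
Qed.

Lemma abel_nonpos (w D : nat -> R) M : (forall n, w (S n) <= w n) ->
  (forall n, 0 <= w n) -> (forall N, sum_f_R0 D N <= 0) ->
  sum_f_R0 (fun n => w n * D n) M <= 0.
Proof.
  intros Hdecr Hpos HD. destruct M as [|M].
  - simpl. specialize (Hpos 0%nat). specialize (HD 0%nat). simpl in HD. nra.
  - rewrite summation_by_parts.
    assert (sum_f_R0 (fun N => (w N - w (S N)) * sum_f_R0 D N) M <= 0).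
    { rewrite <- (sum_eq_R0 (fun _ => 0) M) by reflexivity.
      apply sum_Rle. intros n _.
      specialize (Hdecr n). specialize (HD n). nra. }
    specialize (Hpos (S M)). specialize (HD (S M)). nra.
Qed.

Section PartialSums.

Variables c d : R.
Hypothesis hc : 0 < c.
Hypothesis hd : 0 < d.

Definition g_partial (x : R) (M : nat) : R :=
  x * sum_f_R0 (hyp_term c d (c + d) x) M.

(* If the logarithmic partial sums satisfy a P_N(x2) <= b P_N(x1) for all N,
   so do the partial sums of g, by Abel summation against the nonincreasing
   weights g_coef (here cd <= 1 is used). *)
Lemma g_partial_ratio a b x1 x2 M : c * d <= 1 ->
  (forall N, a * log_partial N x2 <= b * log_partial N x1) ->
  a * g_partial x2 M <= b * g_partial x1 M.
Proof.
  intros hcd Hlog.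
  set (t := fun x n => x ^ S n / INR (S n)).
  assert (Hcomb : forall (w : nat -> R) N,
    sum_f_R0 (fun n => w n * (a * t x2 n - b * t x1 n)) N
    = a * sum_f_R0 (fun n => w n * t x2 n) N - b * sum_f_R0 (fun n => w n * t x1 n) N).
  { intros w N. rewrite !scal_sum, <- minus_sum. apply sum_eq. intros; ring. }
  assert (Habel := abel_nonpos (g_coef c d) (fun n => a * t x2 n - b * t x1 n) M
    (fun n => g_coef_decr c d hc hd n hcd)
    (fun n => Rlt_le _ _ (g_coef_pos c d hc hd n))).
  unfold g_partial. rewrite !(g_partial_sum c d).
  cbv beta in Habel. rewrite Hcomb in Habel. apply Rminus_le, Habel. intros N.
  specialize (Hcomb (fun _ => 1) N). cbv beta in Hcomb.
  rewrite (sum_eq _ (fun n => a * t x2 n - b * t x1 n)) in Hcomb by (intros; ring).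
  rewrite Hcomb, !(sum_eq (fun n => 1 * t _ n) (t _)) by (intros; ring).
  apply Rle_minus, Hlog.
Qed.

Lemma g_partial_mono x1 x2 M : 0 <= x1 <= x2 -> g_partial x1 M <= g_partial x2 M.
Proof.
  intros Hx. unfold g_partial. rewrite !(g_partial_sum c d).
  apply sum_Rle. intros n _.
  apply Rmult_le_compat_l; [apply Rlt_le, g_coef_pos; assumption|].
  apply Rmult_le_compat_r; [apply Rlt_le, Rinv_0_lt_compat, lt_0_INR; lia|].
  apply pow_incr; lra.
Qed.

Lemma g_val_le p q x1 x2 v1 v2 :
  (forall M, p * g_partial x1 M <= q * g_partial x2 M) ->
  g_val c d x1 v1 -> g_val c d x2 v2 -> p * v1 <= q * v2.
Proof.
  intros Hle [l1 [Hl1 ->]] [l2 [Hl2 ->]].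
  apply is_lim_seq_Reals in Hl1, Hl2.
  apply (is_lim_seq_le _ _ (p * (x1 * l1)) (q * (x2 * l2)) Hle);
    do 2 apply (is_lim_seq_scal_l _ _ (Finite _)); assumption.
Qed.

(* The leading coefficient of F is 1, so g(x) >= x for x >= 0. *)
Lemma g_val_ge x v : 0 <= x -> g_val c d x v -> x <= v.
Proof.
  intros Hx [l [Hl ->]].
  assert (1 <= l).
  { replace 1 with (sum_f_R0 (hyp_term c d (c + d) x) 0)
      by (simpl; unfold hyp_term; simpl; field).
    apply sum_incr; [exact Hl|]. intros n. rewrite hyp_term_coef.
    apply Rmult_le_pos; [apply Rlt_le, hyp_coef_pos | apply pow_le]; assumption. }
  nra.
Qed.

End PartialSums.

Theorem mainTheorem9 (c d a b s gb ga : R)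
  (hc : 0 < c) (hd : 0 < d) (hcd : c * d <= 1)
  (ha : 0 < a) (hab : a <= b) (hs : 1 <= s)
  (Hgb : g_val c d (Rpower s b / (1 + Rpower s b)) gb)
  (Hga : g_val c d (Rpower s a / (1 + Rpower s a)) ga) :
  1 <= gb / ga <= b / a.
Proof.
  set (u := ln s).
  assert (Hu : 0 <= u) by (unfold u; rewrite <- ln_1; apply ln_le; lra).
  change (Rpower s b / (1 + Rpower s b)) with (logistic (b * u)) in Hgb.
  change (Rpower s a / (1 + Rpower s a)) with (logistic (a * u)) in Hga.
  assert (Hxa := logistic_bounds (a * u) ltac:(nra)).
  assert (Hxb := logistic_bounds (b * u) ltac:(nra)).
  assert (Hxab : logistic (a * u) <= logistic (b * u)) by (apply logistic_le; nra).
  assert (Hmono : 1 * ga <= 1 * gb).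
  { apply (g_val_le c d) with (2 := Hga) (3 := Hgb). intros M.
    rewrite !Rmult_1_l. apply g_partial_mono; lra. }
  assert (Hratio : a * gb <= b * ga).
  { apply (g_val_le c d) with (2 := Hgb) (3 := Hga). intros M.
    apply g_partial_ratio; [assumption.. |].
    intros N. apply log_partial_logistic_scaled; lra. }
  assert (Hga_pos : 0 < ga).
  { assert (Hge := g_val_ge c d hc hd (logistic (a * u)) ga ltac:(lra) Hga). lra. }
  split.
  - apply (Rmult_le_reg_r ga); [lra|].
    unfold Rdiv. rewrite Rmult_assoc, Rinv_l; lra.
  - apply (Rmult_le_reg_r (ga * a)); [nra|].
    replace (gb / ga * (ga * a)) with (a * gb) by (field; lra).
    replace (b / a * (ga * a)) with (b * ga) by (field; lra).
    exact Hratio.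
Qed.
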